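(* Let $q$ be a prime power and let $\mathcal C\subseteq\mathbb F_q^n$ be an $\mathbb F_q$-linear code of dimension $k\ge 1$ with $4\le d_I(\mathcal C)\le 2n-2$. Then $d_I(\mathcal C)\le 2n-2k$.
   Context: For $\mathbf u,\mathbf v\in\mathbb F_q^n$, the insdel distance $d_I(\mathbf u,\mathbf v)$ is the minimum number of insertions and deletions transforming $\mathbf u$ into $\mathbf v$; equivalently $d_I(\mathbf u,\mathbf v)=2n-2\ell_{\rm LCS}(\mathbf u,\mathbf v)$ where $\ell_{\rm LCS}$ is the length of a longest common subsequence. $d_I(\mathcal C)$ is the minimum insdel distance between distinct codewords. *)

From HB Require Import structures.
From mathcomp Require Import all_boot all_order all_algebra all_field.
Set Implicit Arguments. Unset Strict Implicit. Unset Printing Implicit Defensive.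
Import GRing.Theory.

Definition word (F : finFieldType) (n : nat) (u : 'rV[F]_n) : seq F :=
  [seq u ord0 i | i <- enum 'I_n].

Definition lcs_len (T : finType) (s t : seq T) : nat :=
  \max_(m : (size s).-tuple bool | subseq (mask m s) t) size (mask m s).

Definition insdel_dist (F : finFieldType) (n : nat) (u v : 'rV[F]_n) : nat :=
  2 * n - 2 * lcs_len (word u) (word v).

(* Minimum insdel distance of a code C (minimum over pairs of distinct
   codewords; the default 2n is never attained as a proper bound issue since
   d_I <= 2n always). *)
Definition insdel_min_dist (F : finFieldType) (n : nat)
    (C : {vspace 'rV[F]_n}) : nat :=
  \big[minn/(2 * n)%N]_(u : 'rV[F]_n | u \in C)
    \big[minn/(2 * n)%N]_(v : 'rV[F]_n | (v \in C) && (v != u)) insdel_dist u v.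

From HB Require Import structures.
From mathcomp Require Import all_boot all_order all_algebra all_field.
From mathcomp Require Import zify.
Set Implicit Arguments. Unset Strict Implicit. Unset Printing Implicit Defensive.
Import GRing.Theory.
Local Open Scope ring_scope.

(* If 2k > m + 1, the m + 1 linear conditions v_0 = 0 and u_j = v_(j+1) (j < m)
   on a pair (u, v) in C x C, a space of dimension 2k, have a nonzero solution.
   Such a pair with u <> v shares the subsequence u_0 ... u_(m-1), so
   d_I(C) <= 2n - 2m; if the solution has u = v, then u vanishes on its first
   m + 1 entries and the pair (0, u) works instead.  Taking m = k gives the
   bound; when k = n, taking m = n - 1 would give d_I(C) <= 2 < 4. *)

HB.instance Definition _ := SemiGroup.isComLaw.Build nat minn minnA minnC.

Lemma bigmin_leq (I : finType) (P : pred I) (F : I -> nat) x i0 :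
  P i0 -> (\big[minn/x]_(i | P i) F i <= F i0)%N.
Proof.
by move=> Pi0; rewrite (big_rem_AC _ _ _ _ (mem_index_enum i0)) Pi0 geq_minl.
Qed.

Lemma exists_nonzero_ker (K : fieldType) (aT rT : vectType K) (f : {linear aT -> rT}) :
  (dim rT < dim aT)%N -> exists2 x, x != 0 & f x = 0.
Proof.
move=> lt_rT_aT; pose g := linfun f.
have dim_img : (\dim (g @: fullv) <= dim rT)%N by rewrite -dimvf dimvS ?subvf.
have := limg_ker_dim g fullv; rewrite capfv dimvf => dim_ker.
have ker_neq0 : lker g != 0%VS by rewrite -dimv_eq0; lia.
exists (vpick (lker g)); first by rewrite vpick0.
by apply/eqP; rewrite -lfunE -memv_ker memv_pick.
Qed.

Lemma leq_lcs_len (T : finType) (s t w : seq T) :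
  subseq w s -> subseq w t -> (size w <= lcs_len s t)%N.
Proof.
case/subseqP => b /eqP size_b ->; rewrite /lcs_len.
exact: (@leq_bigmax_cond _ (fun b : (size s).-tuple bool => subseq (mask b s) t)
  (fun b => size (mask b s)) (Tuple size_b)).
Qed.

Lemma insdel_min_dist_le (F : finFieldType) n (C : {vspace 'rV[F]_n}) u v :
  u \in C -> v \in C -> v != u -> (insdel_min_dist C <= insdel_dist u v)%N.
Proof.
move=> Cu Cv v_neq_u; rewrite /insdel_min_dist.
apply: leq_trans (bigmin_leq _ _ Cu) _.
by apply: (bigmin_leq (P := fun w => (w \in C) && (w != u))); rewrite Cv v_neq_u.
Qed.

Section ShiftedPair.

Variables (F : finFieldType) (n : nat).
Implicit Types u v : 'rV[F]_n.

Lemma size_word u : size (word u) = n.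
Proof. by rewrite /word size_map size_enum_ord. Qed.

Lemma nth_wordE u i :
  nth 0 (word u) i = if insub i is Some j then u 0 j else 0.
Proof.
case: insubP => [j _ <- | ]; last first.
  by rewrite -leqNgt => n_le_i; rewrite nth_default ?size_word.
rewrite /word (nth_map j) ?size_enum_ord ?ltn_ord //.
by congr (u _ _); apply: val_inj; rewrite /= nth_enum_ord.
Qed.

Lemma nth_word0 i : nth 0 (word (0 : 'rV[F]_n)) i = 0.
Proof. by rewrite nth_wordE; case: insub => [j|] //; rewrite mxE. Qed.

Lemma nth_wordDZ a u v i :
  nth 0 (word (a *: u + v)) i = a * nth 0 (word u) i + nth 0 (word v) i.
Proof. by rewrite !nth_wordE; case: insub => [j|]; rewrite ?mxE ?mulr0 ?addr0. Qed.

(* [shift_defect m (u, v) = 0] says that the first m + 1 entries of v are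
   0, u_0, ..., u_(m-1). *)
Definition shift_defect m (p : 'rV[F]_n * 'rV[F]_n) : 'rV[F]_m.+1 :=
  \row_(i < m.+1) (nth 0 (word p.2) i - nth 0 (0 :: word p.1) i).

Variable m : nat.

Lemma shift_defect_eq0 u v : shift_defect m (u, v) = 0 ->
  forall i, (i <= m)%N -> nth 0 (word v) i = nth 0 (0 :: word u) i.
Proof.
move/rowP => defect0 i le_im; apply/eqP; rewrite -subr_eq0.
by have := defect0 (Ordinal (le_im : (i < m.+1)%N)); rewrite !mxE => ->.
Qed.

Lemma shift_defect_diag u :
  shift_defect m (u, u) = 0 -> shift_defect m (0, u) = 0.
Proof.
move/shift_defect_eq0 => diag0.
have prefix0 i : (i <= m)%N -> nth 0 (0 :: word u) i = 0.
  elim: i => [//|i IHi] lt_im /=.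
  by rewrite diag0 ?IHi // ltnW.
apply/rowP => i; rewrite !mxE /= (diag0 _ (ltn_ord i)) (prefix0 _ (ltn_ord i)) sub0r.
by case: (val i) => [|j] /=; rewrite ?nth_word0 oppr0.
Qed.

Lemma lcs_len_shift_defect u v : (m < n)%N ->
  shift_defect m (u, v) = 0 -> (m <= lcs_len (word u) (word v))%N.
Proof.
move=> lt_mn /shift_defect_eq0 prefix_eq.
have take_eq : take m (word u) = take m (behead (word v)).
  have m_le_behead : (m <= size (behead (word v)))%N.
    by rewrite size_behead size_word -ltnS prednK // (leq_ltn_trans _ lt_mn).
  apply: (@eq_from_nth _ 0) => [|j]; rewrite !size_takel ?size_word ?(ltnW lt_mn) //.
  by move=> lt_jm; rewrite !nth_take // nth_behead prefix_eq.
have := leq_lcs_len (take_subseq (word u) m) _.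
rewrite size_takel ?size_word ?(ltnW lt_mn) //; apply.
by rewrite take_eq (subseq_trans (take_subseq _ _)) // -drop1 drop_subseq.
Qed.

Lemma exists_shifted_pair (C : {vspace 'rV[F]_n}) :
  (m.+1 < \dim C + \dim C)%N ->
  exists u v, [/\ u \in C, v \in C, u != v & shift_defect m (u, v) = 0].
Proof.
move=> lt_m_2k.
pose f (p : subvs_of C * subvs_of C) := shift_defect m (vsval p.1, vsval p.2).
have f_lin : linear f.
  move=> a [x1 y1] [x2 y2]; apply/rowP => i; rewrite !mxE /= nth_wordDZ.
  case: (val i) => [|j] /=; last by rewrite nth_wordDZ mulrBr opprD addrACA.
  by rewrite !subr0.
pose fL : {linear _ -> _} := HB.pack f (GRing.isLinear.Build _ _ _ _ f f_lin).
have dim_lt : (dim 'rV[F]_m.+1 < dim (subvs_of C * subvs_of C)%type)%N.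
  rewrite dim_matrix mul1r; exact: lt_m_2k.
have [[x y] xy_neq0 fxy0] := exists_nonzero_ker fL dim_lt.
have [u_eq_v | u_neq_v] := eqVneq (vsval x) (vsval y); last first.
  by exists (vsval x), (vsval y); split; rewrite ?subvsP.
have y_neq0 : vsval y != 0.
  apply: contraNneq xy_neq0 => y0.
  have x0 : x = 0 by apply: subvs_inj; rewrite u_eq_v y0 linear0.
  have {}y0 : y = 0 by apply: subvs_inj; rewrite y0 linear0.
  by rewrite x0 y0.
exists 0, (vsval y); split; rewrite ?mem0v ?subvsP 1?eq_sym //.
by apply: shift_defect_diag; rewrite -{1}u_eq_v.
Qed.

End ShiftedPair.

Lemma dimv_rV_leq (K : fieldType) n (U : {vspace 'rV[K]_n}) : (\dim U <= n)%N.
Proof. by rewrite (leq_trans (dimvS (subvf U))) // dimvf dim_matrix mul1r. Qed.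

Lemma insdel_min_dist_le_shift (F : finFieldType) n (C : {vspace 'rV[F]_n}) m :
  (m < n)%N -> (m.+1 < \dim C + \dim C)%N ->
  (insdel_min_dist C <= 2 * n - 2 * m)%N.
Proof.
move=> lt_mn lt_m_2k.
have [u [v [Cu Cv u_neq_v defect0]]] := exists_shifted_pair lt_m_2k.
rewrite eq_sym in u_neq_v; apply: leq_trans (insdel_min_dist_le Cu Cv u_neq_v) _.
by rewrite leq_sub2l // leq_mul2l lcs_len_shift_defect.
Qed.

Theorem corollary3p7 (F : finFieldType) (n k : nat) (C : {vspace 'rV[F]_n}) :
  \dim C = k -> (1 <= k)%N ->
  (4 <= insdel_min_dist C)%N -> (insdel_min_dist C <= 2 * n - 2)%N ->
  (insdel_min_dist C <= 2 * n - 2 * k)%N.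
Proof.
move=> dimC k_gt0 d_ge4 d_le; have k_le_n := dimv_rV_leq C; rewrite dimC in k_le_n.
have [k_le1 | k_gt1] := leqP k 1.
  by have -> : k = 1%N by apply/eqP; rewrite eqn_leq k_le1.
have [k_lt_n | n_le_k] := ltnP k n.
  by apply: insdel_min_dist_le_shift; rewrite // dimC; lia.
have := @insdel_min_dist_le_shift _ _ C n.-1; rewrite dimC; lia.
Qed.
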